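(* Let $n\ge2$, let $\alpha_i,\beta_i>0$ ($i=1,\dots,n$) satisfy $\sum_i\alpha_i=\sum_i\beta_i=1$, let $C$ be a convex subset of a real linear space, let $f:C\to\mathbb R$ be strictly convex, and let $x_1,\dots,x_n\in C$. Set $A:=\{i: \alpha_i/\beta_i=\min_k\alpha_k/\beta_k\}$ and $B:=\{i:\alpha_i/\beta_i=\max_k\alpha_k/\beta_k\}$. Then the inequalities $$\min_{k}\left\{\frac{\alpha_k}{\beta_k}\right\}\left(\sum_{i=1}^n\beta_i f(x_i)-f\Big(\sum_{i=1}^n\beta_i x_i\Big)\right)\le \sum_{i=1}^n\alpha_i f(x_i)-f\Big(\sum_{i=1}^n\alpha_i x_i\Big)\le \max_{k}\left\{\frac{\alpha_k}{\beta_k}\right\}\left(\sum_{i=1}^n\beta_i f(x_i)-f\Big(\sum_{i=1}^n\beta_i x_i\Big)\right)$$ hold; equality holds in the left inequality if and only if for every $j\in\{1,\dots,n\}\setminus A$, $$x_j=\sum_{i\in A}\frac{\alpha_i}{\sum_{l\in A}\alpha_l}x_i=\sum_{i=1}^n\alpha_i x_i,$$ or equivalently $x_j=\sum_{i\in A}\frac{\beta_i}{\sum_{l\in A}\beta_l}x_i=\sum_{i=1}^n\beta_i x_i$; and equality holds in the right inequality if and only if for every $j\in\{1,\dots,n\}\setminus B$, $$x_j=\sum_{i\in B}\frac{\alpha_i}{\sum_{l\in B}\alpha_l}x_i=\sum_{i=1}^n\alpha_i x_i,$$ or equivalently $x_j=\sum_{i\in B}\frac{\beta_i}{\sum_{l\in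 B}\beta_l}x_i=\sum_{i=1}^n\beta_i x_i$. *)

From HB Require Import structures.
From mathcomp Require Import all_boot all_order all_algebra.
Set Implicit Arguments. Unset Strict Implicit. Unset Printing Implicit Defensive.
Import Order.TTheory GRing.Theory Num.Theory.
Local Open Scope ring_scope.

Definition convex_set (R : realFieldType) (V : lmodType R) (C : {pred V}) : Prop :=
  forall (x y : V) (t : R), x \in C -> y \in C -> 0 <= t -> t <= 1 ->
    t *: x + (1 - t) *: y \in C.

Definition strictly_convex_on (R : realFieldType) (V : lmodType R)
    (C : {pred V}) (f : V -> R) : Prop :=
  forall (x y : V) (t : R), x \in C -> y \in C -> x != y -> 0 < t -> t < 1 ->
    f (t *: x + (1 - t) *: y) < t * f x + (1 - t) * f y.

(* min_k r k and max_k r k over a nonempty index set 'I_n (n >= 1);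
   the value for n = 0 is an irrelevant default 0. *)
Definition fmin (R : realFieldType) (n : nat) : ('I_n -> R) -> R :=
  match n with
  | 0 => fun _ => 0
  | n'.+1 => fun r => \big[Num.min/r ord0]_(i < n'.+1) r i
  end.

Definition fmax (R : realFieldType) (n : nat) : ('I_n -> R) -> R :=
  match n with
  | 0 => fun _ => 0
  | n'.+1 => fun r => \big[Num.max/r ord0]_(i < n'.+1) r i
  end.

Definition jgap (R : realFieldType) (V : lmodType R) (n : nat)
    (f : V -> R) (w : 'I_n -> R) (x : 'I_n -> V) : R :=
  \sum_(i < n) w i * f (x i) - f (\sum_(i < n) w i *: x i).

Definition eq_cond (R : realFieldType) (V : lmodType R) (n : nat)
    (S : {set 'I_n}) (w : 'I_n -> R) (x : 'I_n -> V) : Prop :=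
  forall j : 'I_n, j \notin S ->
    x j = \sum_(i in S) (w i / \sum_(l in S) w l) *: x i /\
    x j = \sum_(i < n) w i *: x i.

From HB Require Import structures.
From mathcomp Require Import all_boot all_order all_algebra.
From mathcomp Require Import ring.
Set Implicit Arguments. Unset Strict Implicit. Unset Printing Implicit Defensive.
Import Order.TTheory GRing.Theory Num.Theory.
Local Open Scope ring_scope.

(* Let m be the least ratio alpha_i / beta_i and write alpha = m beta + g, so
   that g >= 0 vanishes exactly on A.  The alpha-mean of the x_i is then the
   convex combination, with weights m and g_i, of the beta-mean and of the x_i,
   and J_alpha - m J_beta is precisely the Jensen gap of f for this
   combination: it is nonnegative, and by strict convexity it vanishes iff
   every x_j with g_j > 0, i.e. j outside A, equals the alpha-mean (which is
   then also the beta-mean).  The upper bound is the same statement with alpha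
   and beta exchanged and m replaced by 1/M. *)

Lemma fmin_le (R : realFieldType) n (r : 'I_n -> R) i : fmin r <= r i.
Proof. by case: n r i => [|n] r [] // i hi; apply: bigmin_le. Qed.

Lemma le_fmax (R : realFieldType) n (r : 'I_n -> R) i : r i <= fmax r.
Proof. by case: n r i => [|n] r [] // i hi; apply: le_bigmax. Qed.

Lemma fmin_attained (R : realFieldType) n (r : 'I_n -> R) :
  (0 < n)%N -> exists i, r i = fmin r.
Proof.
case: n r => [//|n] r _ /=.
apply: (big_ind (fun v => exists i, r i = v)); first by exists ord0.
  by move=> _ _ [i <-] [j <-]; case: leP => _; [exists i | exists j].
by move=> i _; exists i.
Qed.

Lemma fmax_attained (R : realFieldType) n (r : 'I_n -> R) :
  (0 < n)%N -> exists i, r i = fmax r.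
Proof.
case: n r => [//|n] r _ /=.
apply: (big_ind (fun v => exists i, r i = v)); first by exists ord0.
  by move=> _ _ [i <-] [j <-]; case: leP => _; [exists j | exists i].
by move=> i _; exists i.
Qed.

Section Convexity.
Variables (R : realFieldType) (V : lmodType R).

Definition convex_on (C : {pred V}) (f : V -> R) : Prop :=
  forall (u v : V) (t : R), u \in C -> v \in C -> 0 <= t -> t <= 1 ->
    f (t *: u + (1 - t) *: v) <= t * f u + (1 - t) * f v.

Lemma strictly_convex_onW (C : {pred V}) (f : V -> R) :
  strictly_convex_on C f -> convex_on C f.
Proof.
move=> hf u v t uC vC t_ge0 t_le1.
have [->|t_neq0] := eqVneq t 0.
  by rewrite subr0 scale0r add0r mul0r add0r scale1r mul1r.
have [->|t_neq1] := eqVneq t 1.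
  by rewrite subrr scale0r addr0 mul0r addr0 scale1r mul1r.
have [->|uv] := eqVneq u v.
  by rewrite -scalerDl -mulrDl subrKC scale1r mul1r.
apply: ltW; apply: hf => //; first by rewrite lt_neqAle eq_sym t_neq0.
by rewrite lt_neqAle t_neq1.
Qed.

Lemma strictly_convex_on_eq (C : {pred V}) (f : V -> R) u v t :
  strictly_convex_on C f -> u \in C -> v \in C -> 0 < t -> t < 1 ->
  f (t *: u + (1 - t) *: v) = t * f u + (1 - t) * f v -> u = v.
Proof.
move=> hf uC vC t_gt0 t_lt1 feq; apply/eqP/negP => /negP uv.
by have := hf _ _ _ uC vC uv t_gt0 t_lt1; rewrite feq ltxx.
Qed.

End Convexity.

Section Jensen.
Variables (R : realFieldType) (V : lmodType R) (C : {pred V}) (f : V -> R).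
Hypothesis convC : convex_set C.
Variables (I : eqType) (x : I -> V).
Hypothesis xC : forall i, x i \in C.

Lemma sum_weights_eq0 (t : seq I) (w : I -> R) :
  (forall i, 0 <= w i) -> \sum_(j <- t) w j = 0 ->
  \sum_(j <- t) w j *: x j = 0 /\ \sum_(j <- t) w j * f (x j) = 0.
Proof.
move=> w_ge0 /eqP; rewrite psumr_eq0 // => /allP w_eq0.
by split; rewrite big_seq big1 // => j /w_eq0 /eqP ->; rewrite ?scale0r ?mul0r.
Qed.

Section ConvexJensen.
Hypothesis convf : convex_on C f.

Let jensen_on (t : seq I) := forall w : I -> R,
  (forall i, 0 <= w i) -> \sum_(j <- t) w j = 1 ->
  \sum_(j <- t) w j *: x j \in C /\
  f (\sum_(j <- t) w j *: x j) <= \sum_(j <- t) w j * f (x j).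

Lemma jensen_normalized (t : seq I) (w : I -> R) :
  jensen_on t -> (forall i, 0 <= w i) -> 0 < \sum_(j <- t) w j ->
  let S := \sum_(j <- t) w j in
  let z := \sum_(j <- t) (w j / S) *: x j in
  [/\ z \in C, S *: z = \sum_(j <- t) w j *: x j
    & S * f z <= \sum_(j <- t) w j * f (x j)].
Proof.
move=> jensen_t w_ge0 S_gt0 S z.
have S_neq0 : S != 0 := lt0r_neq0 S_gt0.
have [zC fz] : z \in C /\ f z <= \sum_(j <- t) (w j / S) * f (x j).
  apply: jensen_t => [i|]; first exact: divr_ge0 (w_ge0 i) (ltW S_gt0).
  by rewrite -mulr_suml divff.
split=> //.
  by rewrite scaler_sumr; apply: eq_bigr => j _; rewrite scalerA mulrC divfK.
suff -> : \sum_(j <- t) w j * f (x j) = S * \sum_(j <- t) (w j / S) * f (x j).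
  by rewrite ler_pM2l.
by rewrite mulr_sumr; apply: eq_bigr => j _; rewrite mulrA [S * _]mulrC divfK.
Qed.

Lemma jensen_le (s : seq I) (w : I -> R) :
  (forall i, 0 <= w i) -> \sum_(i <- s) w i = 1 ->
  \sum_(i <- s) w i *: x i \in C /\
  f (\sum_(i <- s) w i *: x i) <= \sum_(i <- s) w i * f (x i).
Proof.
elim: s w => [|i t IH] w w_ge0.
  by rewrite big_nil => /esym/eqP; rewrite oner_eq0.
rewrite !big_cons; set S := \sum_(j <- t) w j => wS1.
have wi_compl : 1 - w i = S by rewrite -wS1 addrC addKr.
have [S0|S_gt0] : S = 0 \/ 0 < S by apply/predU1P; rewrite -le0r sumr_ge0.
  have [-> ->] := sum_weights_eq0 w_ge0 S0.
  by rewrite S0 addr0 in wS1; rewrite wS1 scale1r mul1r !addr0.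
have [zC Sz Sfz] := jensen_normalized IH w_ge0 S_gt0.
rewrite -/S in zC Sz Sfz.
set z := \sum_(j <- t) (w j / S) *: x j in zC Sz Sfz.
have wi_le1 : w i <= 1 by rewrite -subr_ge0 wi_compl ltW.
rewrite -Sz -wi_compl; split; first exact: convC (xC i) zC (w_ge0 i) wi_le1.
apply: (le_trans (convf (xC i) zC (w_ge0 i) wi_le1)).
by rewrite lerD2l wi_compl.
Qed.

End ConvexJensen.

Hypothesis hf : strictly_convex_on C f.

Lemma jensen_eq (s : seq I) (w : I -> R) :
  (forall i, 0 <= w i) -> \sum_(i <- s) w i = 1 ->
  f (\sum_(i <- s) w i *: x i) = \sum_(i <- s) w i * f (x i) ->
  forall i, i \in s -> 0 < w i -> x i = \sum_(j <- s) w j *: x j.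
Proof.
move=> w_ge0 + + i si wi_gt0; rewrite !(big_rem i si) /=.
set t := rem i s; set S := \sum_(j <- t) w j => wS1 feq.
have {}wS1 : w i + S = 1 := wS1.
have wi_compl : 1 - w i = S by rewrite -wS1 addrC addKr.
have [S0|S_gt0] : S = 0 \/ 0 < S by apply/predU1P; rewrite -le0r sumr_ge0.
  have [-> _] := sum_weights_eq0 w_ge0 S0.
  by rewrite S0 addr0 in wS1; rewrite wS1 scale1r addr0.
have convf := strictly_convex_onW hf.
have [zC Sz Sfz] := jensen_normalized (@jensen_le convf t) w_ge0 S_gt0.
rewrite -/S in zC Sz Sfz.
set z := \sum_(j <- t) (w j / S) *: x j in zC Sz Sfz.
rewrite -Sz -wi_compl in feq *.
have wi_lt1 : w i < 1 by rewrite -subr_gt0 wi_compl.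
have feq2 : f (w i *: x i + (1 - w i) *: z) = w i * f (x i) + (1 - w i) * f z.
  apply/eqP; rewrite eq_le convf ?(ltW wi_gt0) ?(ltW wi_lt1) //=.
  by rewrite feq lerD2l wi_compl.
have <- := strictly_convex_on_eq hf (xC i) zC wi_gt0 wi_lt1 feq2.
by rewrite -scalerDl addrC subrK scale1r.
Qed.

End Jensen.

Lemma eq_condP (R : realFieldType) (V : lmodType R) n (S : {set 'I_n})
    (w : 'I_n -> R) (x : 'I_n -> V) :
  \sum_(i < n) w i = 1 -> \sum_(i in S) w i != 0 ->
  eq_cond S w x <-> (forall j, j \notin S -> x j = \sum_(i < n) w i *: x i).
Proof.
set z := \sum_(i < n) w i *: x i => w1 wS_neq0.
split=> [eqS j /eqS[] // | x_out j /x_out xj]; split=> //; rewrite xj.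
have zS : \sum_(i in S) w i *: x i = (\sum_(i in S) w i) *: z.
  apply/eqP; rewrite scaler_suml -subr_eq0 -sumrB; apply/eqP.
  have centered : \sum_(i < n) w i *: (x i - z) = 0.
    rewrite (eq_bigr _ (fun i _ => scalerBr _ _ _)) sumrB -scaler_suml.
    by rewrite w1 scale1r subrr.
  rewrite -[X in _ = X]centered [RHS](bigID (mem S)) /=.
  rewrite [X in _ + X]big1 ?addr0 => [|i /x_out ->].
    by apply: eq_bigr => i _; rewrite scalerBr.
  by rewrite subrr scaler0.
under eq_bigr => i _ do rewrite mulrC -scalerA.
by rewrite -scaler_sumr zS scalerA mulVf // scale1r.
Qed.

Section ScaledJensenGap.
Variables (R : realFieldType) (V : lmodType R) (C : {pred V}) (f : V -> R).
Hypotheses (convC : convex_set C) (hf : strictly_convex_on C f).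
Variables (n : nat) (a b : 'I_n -> R) (m : R) (S : {set 'I_n}) (x : 'I_n -> V).
Hypotheses (a_gt0 : forall i, 0 < a i) (b_gt0 : forall i, 0 < b i).
Hypotheses (a1 : \sum_(i < n) a i = 1) (b1 : \sum_(i < n) b i = 1).
Hypotheses (m_gt0 : 0 < m) (mb_le_a : forall i, m * b i <= a i).
Hypothesis S_def : forall i, (i \in S) = (a i == m * b i).
Hypothesis xC : forall i, x i \in C.

Let convf := strictly_convex_onW hf.
Let g i := a i - m * b i.
Let y := \sum_(i < n) b i *: x i.
Let z := \sum_(i < n) a i *: x i.

Let g_ge0 i : 0 <= g i. Proof. by rewrite subr_ge0. Qed.

Let g_eq0 i : i \in S -> g i = 0.
Proof. by rewrite S_def /g => /eqP ->; rewrite subrr. Qed.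

Let g_gt0 i : i \notin S -> 0 < g i.
Proof. by rewrite S_def lt_def g_ge0 /g subr_eq0 andbT. Qed.

Let g_sum : m + \sum_(i < n) g i = 1.
Proof. by rewrite /g sumrB -mulr_sumr a1 b1 mulr1 addrC subrK. Qed.

Let z_decomp : z = m *: y + \sum_(i < n) g i *: x i.
Proof.
rewrite /y scaler_sumr -big_split /=; apply: eq_bigr => i _.
by rewrite scalerA -scalerDl /g addrC subrK.
Qed.

Let sum_g_outside (U : lmodType R) (F : 'I_n -> U) (c : U) :
  (forall j, j \notin S -> F j = c) ->
  \sum_(i < n) g i *: F i = (\sum_(i < n) g i) *: c.
Proof.
move=> F_out; rewrite scaler_suml; apply: eq_bigr => i _.
by case: (boolP (i \in S)) => [/g_eq0 ->|/F_out ->]; rewrite ?scale0r.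
Qed.

(* [z] is the convex combination of [y] with weight [m] and of the [x i] with
   weights [g i]; [None] indexes [y]. *)
Let s := None :: [seq Some i | i <- index_enum 'I_n].
Let W (o : option 'I_n) := oapp g m o.
Let X (o : option 'I_n) := oapp x y o.

Let sum_s (U : nmodType) (F : option 'I_n -> U) :
  \sum_(o <- s) F o = F None + \sum_(i < n) F (Some i).
Proof. by rewrite big_cons big_map. Qed.

Let yC : y \in C.
Proof. by have [] := jensen_le convC xC convf (fun i => ltW (b_gt0 i)) b1. Qed.

Let W_ge0 o : 0 <= W o. Proof. by case: o => [i|] /=; rewrite ?g_ge0 ?ltW. Qed.
Let W1 : \sum_(o <- s) W o = 1. Proof. by rewrite sum_s. Qed.
Let XC o : X o \in C. Proof. by case: o. Qed.

Lemma mean_jensen_le : f z <= m * f y + \sum_(i < n) g i * f (x i).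
Proof.
have [_] := jensen_le convC XC convf W_ge0 W1.
by rewrite !sum_s z_decomp.
Qed.

Lemma mean_jensen_eq : f z = m * f y + \sum_(i < n) g i * f (x i) ->
  y = z /\ forall j, j \notin S -> x j = z.
Proof.
move=> feq; have := jensen_eq convC XC hf W_ge0 W1.
rewrite !sum_s /= -z_decomp => /(_ feq) X_eq.
split; first exact: (X_eq None (mem_head _ _) m_gt0).
move=> j /g_gt0; apply: (X_eq (Some j)).
by rewrite in_cons map_f ?mem_index_enum ?orbT.
Qed.

Lemma jgap_scaled_diff :
  jgap f a x - m * jgap f b x = m * f y + \sum_(i < n) g i * f (x i) - f z.
Proof.
have fz_decomp : \sum_(i < n) a i * f (x i) =
    m * \sum_(i < n) b i * f (x i) + \sum_(i < n) g i * f (x i).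
  rewrite mulr_sumr -big_split /=; apply: eq_bigr => i _.
  by rewrite mulrA -mulrDl /g addrC subrK.
by rewrite /jgap -/y -/z fz_decomp; ring.
Qed.

Lemma jgap_scaled_le : m * jgap f b x <= jgap f a x.
Proof. by rewrite -subr_ge0 jgap_scaled_diff subr_ge0 mean_jensen_le. Qed.

Lemma jgap_scaled_eqE :
  m * jgap f b x = jgap f a x <-> f z = m * f y + \sum_(i < n) g i * f (x i).
Proof.
split=> [eq_gap|feq]; apply/eqP.
  by rewrite eq_sym -subr_eq0 -jgap_scaled_diff eq_gap subrr.
by rewrite eq_sym -subr_eq0 jgap_scaled_diff feq subrr.
Qed.

Lemma mean_outside_eq : (forall j, j \notin S -> x j = z) -> y = z.
Proof.
move=> x_out; have := z_decomp; rewrite (sum_g_outside x_out).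
rewrite -{1}[z]scale1r -{1}g_sum scalerDl => /addIr.
by move=> /(scalerI (lt0r_neq0 m_gt0)) ->.
Qed.

Lemma jgap_scaled_eq_outside_b :
  m * jgap f b x = jgap f a x <-> forall j, j \notin S -> x j = y.
Proof.
split=> [/jgap_scaled_eqE/mean_jensen_eq[-> //] | x_out].
apply/jgap_scaled_eqE.
have fsum : \sum_(i < n) g i * f (x i) = (\sum_(i < n) g i) * f y :=
  @sum_g_outside R^o (fun i => f (x i)) (f y)
    (fun j jS => congr1 f (x_out j jS)).
have -> : z = y.
  by rewrite z_decomp (sum_g_outside x_out) -scalerDl g_sum scale1r.
by rewrite fsum -mulrDl g_sum mul1r.
Qed.

Lemma jgap_scaled_eq_outside_a :
  m * jgap f b x = jgap f a x <-> forall j, j \notin S -> x j = z.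
Proof.
split=> [/jgap_scaled_eqE/mean_jensen_eq[] // | x_out].
by apply/jgap_scaled_eq_outside_b; rewrite (mean_outside_eq x_out).
Qed.

Lemma jgap_scaled_bound : (exists i, i \in S) ->
  [/\ m * jgap f b x <= jgap f a x,
      (m * jgap f b x = jgap f a x <-> eq_cond S a x) &
      (m * jgap f b x = jgap f a x <-> eq_cond S b x)].
Proof.
move=> [i0 i0S].
have sumS_neq0 (w : 'I_n -> R) : (forall i, 0 < w i) -> \sum_(i in S) w i != 0.
  move=> w_gt0; apply: lt0r_neq0; rewrite (bigD1 i0) //= ltr_wpDr ?w_gt0 //.
  by apply: sumr_ge0 => i _; apply: ltW.
split; first exact: jgap_scaled_le.
  exact: iff_trans jgap_scaled_eq_outside_a
    (iff_sym (eq_condP x a1 (sumS_neq0 a a_gt0))).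
exact: iff_trans jgap_scaled_eq_outside_b
  (iff_sym (eq_condP x b1 (sumS_neq0 b b_gt0))).
Qed.

End ScaledJensenGap.

Theorem proposition2p4 (R : realFieldType) (V : lmodType R) (n : nat)
    (alpha beta : 'I_n -> R) (C : {pred V}) (f : V -> R) (x : 'I_n -> V) :
  (2 <= n)%N ->
  (forall i, 0 < alpha i) -> (forall i, 0 < beta i) ->
  \sum_(i < n) alpha i = 1 -> \sum_(i < n) beta i = 1 ->
  convex_set C -> strictly_convex_on C f ->
  (forall i, x i \in C) ->
  let r := fun i => alpha i / beta i in
  let m := fmin r in
  let M := fmax r in
  let A := [set i | r i == m] in
  let B := [set i | r i == M] in
  [/\ m * jgap f beta x <= jgap f alpha x,
      jgap f alpha x <= M * jgap f beta x,
      (m * jgap f beta x = jgap f alpha x <-> eq_cond A alpha x) /\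
      (m * jgap f beta x = jgap f alpha x <-> eq_cond A beta x) &
      (jgap f alpha x = M * jgap f beta x <-> eq_cond B alpha x) /\
      (jgap f alpha x = M * jgap f beta x <-> eq_cond B beta x)].
Proof.
move=> n_ge2 alpha_gt0 beta_gt0 alpha1 beta1 convC hf xC r m M A B.
have [i1 ri1] := fmin_attained r (ltnW n_ge2).
have [i2 ri2] := fmax_attained r (ltnW n_ge2).
have m_gt0 : 0 < m by rewrite /m -ri1 divr_gt0.
have M_gt0 : 0 < M by rewrite /M -ri2 divr_gt0.
have r_eq i c : (r i == c) = (alpha i == c * beta i).
  by rewrite /r; apply/eqP/eqP => [<-|->]; rewrite ?divfK ?mulfK ?lt0r_neq0.
have mbeta_le i : m * beta i <= alpha i.
  by rewrite -ler_pdivlMr //; exact: fmin_le r i.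
have A_def i : (i \in A) = (alpha i == m * beta i) by rewrite inE r_eq.
have A_neq0 : exists i, i \in A by exists i1; rewrite inE ri1.
have [le_m eqA_alpha eqA_beta] := jgap_scaled_bound convC hf alpha_gt0 beta_gt0
  alpha1 beta1 m_gt0 mbeta_le A_def xC A_neq0.
have Malpha_le i : M^-1 * alpha i <= beta i.
  by rewrite ler_pdivrMl // -ler_pdivrMr //; exact: le_fmax r i.
have B_def i : (i \in B) = (beta i == M^-1 * alpha i).
  by rewrite inE r_eq; apply/eqP/eqP => ->; rewrite ?mulKf ?mulVKf ?lt0r_neq0.
have B_neq0 : exists i, i \in B by exists i2; rewrite inE ri2.
have Minv_gt0 : 0 < M^-1 by rewrite invr_gt0.
have [le_M eqB_beta eqB_alpha] := jgap_scaled_bound convC hf beta_gt0 alpha_gt0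
  beta1 alpha1 Minv_gt0 Malpha_le B_def xC B_neq0.
have scale_M u v : M^-1 * u = v <-> u = M * v.
  by split=> [<-|->]; rewrite ?mulVKf ?mulKf ?lt0r_neq0.
split=> //; first by rewrite -ler_pdivrMl.
by split; [split=> [/scale_M/eqB_alpha|/eqB_alpha/scale_M] |
           split=> [/scale_M/eqB_beta|/eqB_beta/scale_M]].
Qed.
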